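(* Let $j,k_G,k_H$ be positive integers with $j\le k_G\le k_H$, let $G$ be a $(j,k_G)$-biclique and $H$ a $(j,k_H)$-biclique, and let $g(x)$ and $h(x)$ be the interesting factors of $P_G(x)$ and $P_H(x)$ respectively. If $\bar G$ and $\bar H$ are matching equivalent, then $g(x)=h(x+k_H-k_G)$.
   Context: All graphs are finite and simple. For integers $1\le j\le k$, a $(j,k)$-biclique is a graph whose vertex set is the disjoint union of a $j$-clique and a $k$-clique, with an arbitrary set of additional edges each joining a vertex of the $j$-clique to a vertex of the $k$-clique; $\bar G$ denotes the complement of $G$. $P_G(x)$ is the chromatic polynomial, $(x)_n=x(x-1)\cdots(x-n+1)$ the falling factorial. For a $(j,k)$-biclique $G$, the polynomial $(x)_k$ divides $P_G(x)$, and the interesting factor of $P_G$ is the degree-$j$ polynomial $g(x)=P_G(x)/(x)_k$. $m_F^i$ denotes the number of matchings with $i$ edges in a graph $F$; two graphs $F_1,F_2$ are matching equivalent if $m_{F_1}^i=m_{F_2}^i$ for all $i\ge 0$. *)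

From HB Require Import structures.
From mathcomp Require Import all_boot all_order all_algebra.
Set Implicit Arguments. Unset Strict Implicit. Unset Printing Implicit Defensive.
Import Order.TTheory GRing.Theory Num.Theory.
Local Open Scope ring_scope.

Definition simple_graph (T : finType) (e : rel T) : Prop :=
  symmetric e /\ irreflexive e.

Definition complement (T : finType) (e : rel T) : rel T :=
  fun x y => (x != y) && ~~ e x y.

(* (j,k)-biclique: vertex set 'I_j + 'I_k (disjoint union of the j-clique and
   the k-clique); any two distinct vertices on the same side are adjacent;
   edges between the sides are arbitrary. *)
Definition biclique (j k : nat) (e : rel ('I_j + 'I_k)%type) : Prop :=
  simple_graph e /\
  (forall a b : 'I_j, a != b -> e (inl a) (inl b)) /\
  (forall a b : 'I_k, a != b -> e (inr a) (inr b)).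

Definition is_edge (T : finType) (e : rel T) (A : {set T}) : bool :=
  [exists x, exists y, e x y && (A == [set x; y])].

Definition is_matching (T : finType) (e : rel T) (M : {set {set T}}) : bool :=
  [forall A in M, is_edge e A] &&
  [forall A in M, forall B in M, (A != B) ==> [disjoint A & B]].

Definition matching_number (T : finType) (e : rel T) (i : nat) : nat :=
  #|[set M : {set {set T}} | is_matching e M && (#|M| == i)%N]|.

Definition matching_equivalent (T1 T2 : finType) (e1 : rel T1) (e2 : rel T2)
  : Prop := forall i : nat, matching_number e1 i = matching_number e2 i.

Definition num_colourings (T : finType) (e : rel T) (n : nat) : nat :=
  #|[set f : {ffun T -> 'I_n} | [forall x, forall y, e x y ==> (f x != f y)]]|.

(* p is the chromatic polynomial of the graph: its value at every natural
   number n is the number of proper n-colourings. (Such a polynomial exists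
   and is unique.) *)
Definition is_chromatic_poly (T : finType) (e : rel T) (p : {poly int}) : Prop :=
  forall n : nat, p.[n%:R] = (num_colourings e n)%:R.

Definition falling (n : nat) : {poly int} := \prod_(i < n) ('X - (i%:R)%:P).

Definition interesting_factor (k : nat) (p : {poly int}) : {poly int} :=
  p %/ falling k.

From HB Require Import structures.
From mathcomp Require Import all_boot all_order all_algebra.
Set Implicit Arguments. Unset Strict Implicit. Unset Printing Implicit Defensive.
Import GRing.Theory.

(* In a (j,k)-biclique both sides are cliques, so every colour class of a
   proper colouring is a single vertex or a non-edge joining the two sides,
   and the two-element classes form a matching of the complement.  For a
   fixed matching M of the complement, the proper colourings whose
   two-element classes are exactly M are the injective colourings of the
   graph with the edges of M contracted, which has k + j - |M| vertices.
   Hence P_G(x) = sum_i m_i (x)_(k+j-i) = (x)_k sum_i m_i (x-k)_(j-i), so the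
   interesting factor is sum_i m_i (x-k)_(j-i): it depends on k only through
   the shift x |-> x - k. *)

Definition factors_injectively (T C : finType) (r : T -> T) (f : {ffun T -> C}) :=
  [forall x, f (r x) == f x] &&
  [forall x, forall y, [&& r x == x, r y == y & f x == f y] ==> (x == y)].

Lemma card_factors_injectively (T C : finType) (r : T -> T) :
  idempotent_fun r ->
  #|[set f : {ffun T -> C} | factors_injectively r f]| =
  (#|C| ^_ #|[pred x | r x == x]|)%N.
Proof.
move=> r_idem; pose S := {x : T | r x == x}.
have rS x : r (r x) == r x by apply/eqP; exact: r_idem.
pose extend (phi : {ffun S -> C}) : {ffun T -> C} :=
  [ffun x => phi (exist _ (r x) (rS x))].
have extend_inj : injective extend.
  move=> phi psi /ffunP eq_ext; apply/ffunP => s; have := eq_ext (val s).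
  rewrite !ffunE; suff -> : exist _ (r (val s)) (rS (val s)) = s by [].
  by apply: val_inj; apply/eqP; case: s.
rewrite -card_sig -card_inj_ffuns -(card_imset _ extend_inj).
apply: eq_card => f; rewrite !inE; apply/idP/imsetP.
- case/andP => /forallP f_r /forallP f_inj.
  exists [ffun s : S => f (val s)].
    rewrite inE; apply/injectiveP => s t; rewrite !ffunE => fst.
    apply: val_inj; have /forallP/(_ (val t)) := f_inj (val s).
    by rewrite fst (valP s) (valP t) eqxx => /eqP.
  by apply/ffunP => x; rewrite !ffunE /= (eqP (f_r x)).
- case=> phi; rewrite inE => /injectiveP phi_inj ->.
  apply/andP; split; apply/forallP => x.
    by rewrite !ffunE; apply/eqP; congr (phi _); apply: val_inj; exact: r_idem.
  apply/forallP => y; apply/implyP => /and3P [/eqP rx /eqP ry].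
  by rewrite !ffunE => /eqP /phi_inj /(congr1 val) /=; rewrite rx ry => ->.
Qed.

Lemma set2_inl_inr_inj (A B : finType) (a a' : A) (b b' : B) :
  [set inl a; inr b] = [set inl a'; inr b'] :> {set A + B} -> a = a' /\ b = b'.
Proof.
move=> eq_ab; split.
  have : (inl a : A + B) \in [set inl a'; inr b'] by rewrite -eq_ab set21.
  by rewrite !inE => /orP [/eqP [] | /eqP].
have : (inr b : A + B) \in [set inl a'; inr b'] by rewrite -eq_ab set22.
by rewrite !inE => /orP [/eqP | /eqP []].
Qed.

Definition proper_colouring (T C : finType) (e : rel T) (f : {ffun T -> C}) :=
  [forall x, forall y, e x y ==> (f x != f y)].

Lemma proper_colouringP (T C : finType) (e : rel T) (f : {ffun T -> C}) :
  reflect (forall x y, e x y -> f x != f y) (proper_colouring e f).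
Proof.
apply: (iffP forallP) => [f_ok x y exy | f_ok x].
  by have /forallP/(_ y)/implyP := f_ok x; apply.
by apply/forallP => y; apply/implyP/f_ok.
Qed.

Definition monochromatic_nonedges (T C : finType) (e : rel T) (f : {ffun T -> C})
  : {set {set T}} :=
  [set X | is_edge (complement e) X && [forall x in X, forall y in X, f x == f y]].

Local Open Scope ring_scope.

Definition falling_from (k r : nat) : {poly int} := \prod_(t < r) ('X - (k + t)%N%:R%:P).

Lemma falling_mul_falling_from k r : falling k * falling_from k r = falling (k + r).
Proof. by rewrite /falling /falling_from [in RHS]big_split_ord. Qed.

Lemma horner_falling m n : (falling m).[n%:R] = (n ^_ m)%N%:R.
Proof.
elim: m => [|m IHm]; first by rewrite /falling big_ord0 hornerC.
rewrite /falling big_ord_recr /= hornerM -/(falling m) IHm !hornerE ffactnSr.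
case: (leqP m n) => [le_mn | lt_nm]; first by rewrite natrM natrB.
by rewrite ffact_small // !mul0r.
Qed.

Lemma comp_falling_from k k' r :
  (k <= k')%N -> falling_from k' r \Po ('X + (k' - k)%N%:R%:P) = falling_from k r.
Proof.
move=> le_kk'; rewrite /falling_from rmorph_prod; apply: eq_bigr => t _.
rewrite rmorphB /= comp_polyX comp_polyC.
have -> : (k' + t)%N%:R = (k + t)%N%:R + (k' - k)%N%:R :> int.
  by rewrite -natrD addnAC subnKC.
by rewrite polyCD opprD addrA addrAC addrK.
Qed.

Lemma poly_eq_on_nat (p q : {poly int}) : (forall n : nat, p.[n%:R] = q.[n%:R]) -> p = q.
Proof.
move=> pq_nat; apply/eqP; rewrite -subr_eq0; apply/negPn/negP => pq_neq0.
pose rs := [seq i%:R : int | i <- iota 0 (size (p - q))].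
have rs_roots : all (root (p - q)) rs.
  by apply/allP => x /mapP [i _ ->]; rewrite /root !hornerE pq_nat subrr.
have rs_uniq : uniq rs.
  by rewrite map_inj_uniq ?iota_uniq // => a b /eqP; rewrite Num.Theory.eqr_nat => /eqP.
by have := max_poly_roots pq_neq0 rs_roots rs_uniq; rewrite size_map size_iota ltnn.
Qed.

Local Close Scope ring_scope.

Section BicliqueColourings.

Variables (j k : nat) (e : rel ('I_j + 'I_k)%type).
Hypothesis e_biclique : biclique e.

Local Notation V := ('I_j + 'I_k)%type.

Let e_sym : symmetric e := proj1 (proj1 e_biclique).
Let e_irr : irreflexive e := proj2 (proj1 e_biclique).
Let e_inl : forall a a', a != a' -> e (inl a) (inl a') := proj1 (proj2 e_biclique).
Let e_inr : forall b b', b != b' -> e (inr b) (inr b') := proj2 (proj2 e_biclique).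

Lemma complement_edgeP (X : {set V}) :
  is_edge (complement e) X -> exists a b, X = [set inl a; inr b] /\ ~~ e (inl a) (inr b).
Proof.
case/existsP => x /existsP [y /andP [/andP [x_neq_y not_exy] /eqP ->]].
case: x y x_neq_y not_exy => [a|b] [a'|b'] x_neq_y not_exy.
- by rewrite e_inl // in not_exy; apply: contra x_neq_y => /eqP ->.
- by exists a, b'.
- by exists a', b; rewrite setUC e_sym.
- by rewrite e_inr // in not_exy; apply: contra x_neq_y => /eqP ->.
Qed.

Section Colours.

Variable C : finType.
Implicit Types f : {ffun V -> C}.

Lemma proper_colouring_inl_inj f :
  proper_colouring e f -> injective (fun a => f (inl a)).
Proof.
move/proper_colouringP => f_ok a a' faa'; apply/eqP/negPn/negP.
by move=> /e_inl /f_ok; rewrite faa' eqxx.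
Qed.

Lemma proper_colouring_inr_inj f :
  proper_colouring e f -> injective (fun b => f (inr b)).
Proof.
move/proper_colouringP => f_ok b b' fbb'; apply/eqP/negPn/negP.
by move=> /e_inr /f_ok; rewrite fbb' eqxx.
Qed.

Lemma in_monochromatic_nonedges f a b :
  ([set inl a; inr b] \in monochromatic_nonedges e f) =
  ~~ e (inl a) (inr b) && (f (inl a) == f (inr b)).
Proof.
rewrite inE; apply/andP/andP => [[/complement_edgeP [a0 [b0 []]]] | [not_eab fab]].
  move=> /set2_inl_inr_inj [-> ->] not_eab.
  move=> /forallP/(_ (inl a0)); rewrite set21 /= => /forallP/(_ (inr b0)).
  by rewrite set22.
split.
  apply/existsP; exists (inl a); apply/existsP; exists (inr b).
  by rewrite /complement not_eab eqxx andbT.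
apply/forallP => x; apply/implyP; rewrite !inE => /orP [/eqP ->|/eqP ->];
apply/forallP => y; apply/implyP; rewrite !inE => /orP [/eqP ->|/eqP ->];
by rewrite ?(eqP fab) eqxx.
Qed.

Lemma monochromatic_nonedges_matching f :
  proper_colouring e f -> is_matching (complement e) (monochromatic_nonedges e f).
Proof.
move=> f_ok; apply/andP; split.
  by apply/forallP => X; apply/implyP; rewrite inE => /andP [].
apply/forallP => X; apply/implyP => fX; apply/forallP => Y; apply/implyP => fY.
apply/implyP => X_neq_Y.
have := fX; rewrite inE => /andP [/complement_edgeP [a [b [EX _]]] _].
have := fY; rewrite inE => /andP [/complement_edgeP [a' [b' [EY _]]] _].
rewrite EX EY !in_monochromatic_nonedges in fX fY X_neq_Y *.
case/andP: fX => _ /eqP fab; case/andP: fY => _ /eqP fab'.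
have a_neq : a != a'.
  apply: contra X_neq_Y => /eqP eqa; rewrite -eqa in fab'.
  by rewrite -(proper_colouring_inr_inj f_ok (etrans (esym fab) fab')) eqa.
have b_neq : b != b'.
  apply: contra X_neq_Y => /eqP eqb; rewrite -eqb in fab'.
  by rewrite -(proper_colouring_inl_inj f_ok (etrans fab (esym fab'))) eqb.
have inl_eq (c c' : 'I_j) : (inl c == inl c' :> V) = (c == c') by apply/eqP/eqP => [[]|->].
have inr_eq (c c' : 'I_k) : (inr c == inr c' :> V) = (c == c') by apply/eqP/eqP => [[]|->].
rewrite -setI_eq0; apply/eqP/setP => -[c|c]; rewrite !inE /= ?inl_eq ?inr_eq.
  by case: (eqVneq c a) => [->|] //=; rewrite (negPf a_neq).
by case: (eqVneq c b) => [->|] //=; rewrite (negPf b_neq).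
Qed.

Section Matching.

Variable M : {set {set V}}.
Hypothesis M_matching : is_matching (complement e) M.

Lemma matching_edgeP X :
  X \in M -> exists a b, X = [set inl a; inr b] /\ ~~ e (inl a) (inr b).
Proof.
case/andP: M_matching => /forallP M_edges _ MX; apply: complement_edgeP.
by have := M_edges X; rewrite MX.
Qed.

Lemma matching_nonedge a b : [set inl a; inr b] \in M -> ~~ e (inl a) (inr b).
Proof. by case/matching_edgeP => a0 [b0 [/set2_inl_inr_inj [-> ->]]]. Qed.

Lemma matching_eq X Y x : X \in M -> Y \in M -> x \in X -> x \in Y -> X = Y.
Proof.
case/andP: M_matching => _ /forallP M_disj MX MY xX xY.
have := M_disj X; rewrite MX /= => /forallP /(_ Y); rewrite MY /= => /implyP X_disj_Y.
by apply/eqP/negPn/negP => /X_disj_Y /disjointFr /(_ xX); rewrite xY.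
Qed.

Lemma matching_inl_uniq a b b' :
  [set inl a; inr b] \in M -> [set inl a; inr b'] \in M -> b = b'.
Proof.
by move=> Mb Mb'; case/set2_inl_inr_inj: (matching_eq Mb Mb' (set21 _ _) (set21 _ _)).
Qed.

Lemma matching_inr_uniq a a' b :
  [set inl a; inr b] \in M -> [set inl a'; inr b] \in M -> a = a'.
Proof.
by move=> Ma Ma'; case/set2_inl_inr_inj: (matching_eq Ma Ma' (set22 _ _) (set22 _ _)).
Qed.

Definition partner (a : 'I_j) : option 'I_k := [pick b | [set inl a; inr b] \in M].

Lemma partnerP a b : [set inl a; inr b] \in M -> partner a = Some b.
Proof.
rewrite /partner => Mab; case: pickP => [b' Mab'|/(_ b)]; last by rewrite Mab.
by rewrite (matching_inl_uniq Mab Mab').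
Qed.

Lemma partner_mem a b : partner a = Some b -> [set inl a; inr b] \in M.
Proof. by rewrite /partner; case: pickP => // b' Mab' [<-]. Qed.

(* The quotient map of the contraction of the edges of M. *)
Definition contract (x : V) : V :=
  if x is inl a then (if partner a is Some b then inr b else x) else x.

Lemma contract_idem x : contract (contract x) = contract x.
Proof. by case: x => [a|b] //=; case Ea: (partner a) => [b|] /=; rewrite ?Ea. Qed.

Lemma card_matched : #|[set a | partner a != None]| = #|M|.
Proof.
pose edge_at a : {set V} := if partner a is Some b then [set inl a; inr b] else set0.
have edge_at_inj : {in [set a | partner a != None] &, injective edge_at}.
  move=> a a'; rewrite !inE /edge_at.
  case: (partner a) => [b|] // _; case: (partner a') => [b'|] // _.
  by case/set2_inl_inr_inj.
rewrite -(card_in_imset edge_at_inj); apply: eq_card => X; apply/imsetP/idP.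
- case=> a; rewrite inE /edge_at; case Ea: (partner a) => [b|] // _ ->.
  exact: partner_mem.
- move=> MX; have [a [b [EX _]]] := matching_edgeP MX; rewrite EX in MX.
  by exists a; rewrite ?inE /edge_at (partnerP MX) ?EX.
Qed.

Lemma card_matching_le : (#|M| <= j)%N.
Proof. by rewrite -card_matched -[X in (_ <= X)%N](card_ord j) max_card. Qed.

Lemma card_contract_fixed : #|[pred x | contract x == x]| = (k + (j - #|M|))%N.
Proof.
have card_moved : #|[predC [pred x | contract x == x]]| = #|M|.
  rewrite -card_matched -(card_imset _ (@inl_inj 'I_j 'I_k)).
  apply: eq_card => -[a|b]; rewrite !inE /=.
    rewrite (mem_imset _ _ (@inl_inj _ _)) inE.
    by case: (partner a) => [b|] /=; rewrite ?eqxx.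
  by rewrite eqxx; apply/esym/imsetP => -[a _].
have := cardC [pred x | contract x == x]; rewrite card_moved card_sum !card_ord.
by rewrite addnBA ?card_matching_le // [(k + j)%N]addnC => <-; rewrite addnK.
Qed.

Definition matched_colouring (f : {ffun V -> C}) : Prop :=
  [/\ injective (fun a => f (inl a)), injective (fun b => f (inr b)) &
      forall a b, f (inl a) = f (inr b) <-> [set inl a; inr b] \in M].

Lemma factors_injectively_contractP f :
  factors_injectively contract f <-> matched_colouring f.
Proof.
split.
- case/andP => /forallP f_contract /forallP f_inj.
  have {}f_contract x : f (contract x) = f x by exact/eqP.
  have contract_eq x y : f x = f y -> contract x = contract y.
    move=> fxy; have /forallP/(_ (contract y)) := f_inj (contract x).
    by rewrite !contract_idem !f_contract fxy !eqxx => /eqP.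
  split.
  + move=> a a' /contract_eq /=.
    case Ea: (partner a) => [b|]; case Ea': (partner a') => [b'|] // [eq_bb'] //.
    by rewrite eq_bb' in Ea; exact: matching_inr_uniq (partner_mem Ea) (partner_mem Ea').
  + by move=> b b' /contract_eq [].
  + move=> a b; split=> [/contract_eq /= | /partnerP Eb]; last first.
      by rewrite -f_contract /= Eb.
    by case Ea: (partner a) => [b'|] // [<-]; exact: partner_mem.
- case=> inl_inj inr_inj cross; apply/andP; split; apply/forallP => x.
  + case: x => [a|b] //=; case Ea: (partner a) => [b|] //.
    by apply/eqP/esym/cross/partner_mem.
  + apply/forallP => y; apply/implyP => /and3P [/eqP fixx /eqP fixy /eqP fxy].
    case: x y fixx fixy fxy => [a|b] [a'|b'] /= fixx fixy fxy.
    * by rewrite (inl_inj _ _ fxy) eqxx.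
    * by move: fixx; rewrite (partnerP ((cross _ _).1 fxy)).
    * by move: fixy; rewrite (partnerP ((cross _ _).1 (esym fxy))).
    * by rewrite (inr_inj _ _ fxy) eqxx.
Qed.

Lemma proper_monochromaticP f :
  proper_colouring e f && (monochromatic_nonedges e f == M) <-> matched_colouring f.
Proof.
split.
- case/andP => f_ok /eqP f_M.
  split; [exact: proper_colouring_inl_inj | exact: proper_colouring_inr_inj |].
  move=> a b; rewrite -f_M in_monochromatic_nonedges.
  split=> [fab | /andP [_ /eqP //]]; rewrite fab eqxx andbT.
  by apply/negP => /(proper_colouringP _ _ f_ok); rewrite fab eqxx.
- case=> inl_inj inr_inj cross; apply/andP; split.
  + apply/proper_colouringP => -[a|b] [a'|b'] exy; apply/negP => /eqP fxy.
    * by move: exy; rewrite (inl_inj _ _ fxy) e_irr.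
    * by move: exy; rewrite (negbTE (matching_nonedge ((cross _ _).1 fxy))).
    * by move: exy; rewrite e_sym (negbTE (matching_nonedge ((cross _ _).1 (esym fxy)))).
    * by move: exy; rewrite (inr_inj _ _ fxy) e_irr.
  + apply/eqP/setP => X; apply/idP/idP => MX.
    * have := MX; rewrite inE => /andP [/complement_edgeP [a [b [EX _]]] _].
      by move: MX; rewrite EX in_monochromatic_nonedges => /andP [_ /eqP /cross].
    * have [a [b [EX not_eab]]] := matching_edgeP MX.
      by rewrite EX in_monochromatic_nonedges not_eab; apply/eqP/cross; rewrite -EX.
Qed.

End Matching.

End Colours.

Lemma num_colourings_matchings n :
  num_colourings e n =
  (\sum_(M | is_matching (complement e) M) n ^_ (k + (j - #|M|)))%N.
Proof.
transitivity (\sum_(f : {ffun V -> 'I_n} | proper_colouring e f) 1)%N.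
  by rewrite sum1_card; apply: eq_card => f; rewrite inE.
rewrite (partition_big (monochromatic_nonedges e) (is_matching (complement e))) /=;
  last exact: monochromatic_nonedges_matching.
apply: eq_bigr => M M_matching; rewrite sum1_card.
rewrite -(card_contract_fixed M_matching) -[n in (n ^_ _)%N](card_ord n).
rewrite -(card_factors_injectively _ (contract_idem M)).
apply: eq_card => f; rewrite inE; apply/idP/idP.
  by move=> /(proper_monochromaticP M_matching) /(factors_injectively_contractP M_matching).
by move=> /(factors_injectively_contractP M_matching) /(proper_monochromaticP M_matching).
Qed.

Lemma num_colourings_matching_numbers n :
  num_colourings e n =
  (\sum_(i < j.+1) matching_number (complement e) i * n ^_ (k + (j - i)))%N.
Proof.
rewrite num_colourings_matchings.
rewrite (partition_big (fun M : {set {set V}} => inord #|M| : 'I_j.+1) xpredT) //=.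
apply: eq_bigr => i _.
rewrite (eq_bigr (fun _ => n ^_ (k + (j - i)))); last first.
  by move=> M /andP [M_matching /eqP <-]; rewrite inordK ?ltnS ?card_matching_le.
rewrite sum_nat_const /matching_number; congr (_ * _)%N.
apply: eq_card => M; rewrite !inE; apply: andb_id2l => M_matching.
have := card_matching_le M_matching; rewrite -ltnS => M_small.
by apply/eqP/eqP => [<-|->]; [rewrite inordK | apply: val_inj; rewrite /= inordK].
Qed.

Local Open Scope ring_scope.

Definition matching_factor : {poly int} :=
  \sum_(i < j.+1) falling_from k (j - i) *+ matching_number (complement e) i.

Lemma chromatic_poly_biclique P :
  is_chromatic_poly e P -> P = falling k * matching_factor.
Proof.
move=> P_chromatic; apply: poly_eq_on_nat => n.
rewrite P_chromatic num_colourings_matching_numbers mulr_sumr horner_sum natr_sum.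
apply: eq_bigr => i _.
by rewrite mulrnAr falling_mul_falling_from hornerMn horner_falling natrM mulr_natl.
Qed.

Lemma interesting_factor_biclique P :
  is_chromatic_poly e P -> interesting_factor k P = matching_factor.
Proof.
move=> /chromatic_poly_biclique ->.
by rewrite /interesting_factor Pdiv.IdomainMonic.mulKp ?monic_prod_XsubC.
Qed.

End BicliqueColourings.

Unset Implicit Arguments.
Local Open Scope ring_scope.

Theorem mainTheorem2 (j kG kH : nat) (hj : (0 < j)%N) (hjk : (j <= kG)%N)
  (hk : (kG <= kH)%N)
  (G : rel ('I_j + 'I_kG)%type) (H : rel ('I_j + 'I_kH)%type)
  (hG : biclique G) (hH : biclique H)
  (PG PH : {poly int})
  (hPG : is_chromatic_poly G PG) (hPH : is_chromatic_poly H PH)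
  (hmatch : matching_equivalent (complement G) (complement H)) :
  interesting_factor kG PG =
  (interesting_factor kH PH) \Po ('X + ((kH - kG)%N%:R)%:P).
Proof.
rewrite (interesting_factor_biclique hG hPG) (interesting_factor_biclique hH hPH).
rewrite /matching_factor raddf_sum; apply: eq_bigr => i _.
by rewrite raddfMn /= comp_falling_from // hmatch.
Qed.
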